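(* Let $A$ be a $J_p$-set in $(\mathbb{N},+)$ and let $B\subseteq\mathbb{N}$ be finite. Then $A\setminus B$ is a $J_p$-set in $(\mathbb{N},+)$.
   Context: $\mathbb{N}=\{1,2,\dots\}$. $\mathbb{P}$ denotes the set of polynomials with coefficients in $\mathbb{N}\cup\{0\}$ and zero constant term which map $\mathbb{N}$ into $\mathbb{N}$. $\mathcal{P}_f(X)$ is the set of nonempty finite subsets of $X$, and ${}^{\mathbb{N}}\mathbb{N}$ the set of sequences in $\mathbb{N}$. For $R\in\mathcal{P}_f(\mathbb{P})$, $L\in\mathcal{P}_f({}^{\mathbb{N}}\mathbb{N})$, $a\in\mathbb{N}$, $H\in\mathcal{P}_f(\mathbb{N})$, $S_{R,L}(a,H)=\{a+f(\sum_{t\in H}g(t)): f\in R, g\in L\}$. $A\subseteq\mathbb{N}$ is a $J_p$-set if for every $R\in\mathcal{P}_f(\mathbb{P})$ and $L\in\mathcal{P}_f({}^{\mathbb{N}}\mathbb{N})$ there exist $a\in\mathbb{N}$ and $H\in\mathcal{P}_f(\mathbb{N})$ with $S_{R,L}(a,H)\subseteq A$. *)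

From mathcomp Require Import all_boot.
From Stdlib Require List.
Set Implicit Arguments. Unset Strict Implicit. Unset Printing Implicit Defensive.

(* Subsets of N = {1,2,...} are represented as predicates on nat; only
   their values at positive naturals matter (we always require membership
   to imply positivity where relevant). *)

Definition peval (c : seq nat) (x : nat) : nat :=
  \sum_(i < size c) nth 0 c i * x ^ i.

Definition inP (c : seq nat) : Prop :=
  nth 0 c 0 = 0 /\ (forall n, 0 < n -> 0 < peval c n).

Definition NSeq (g : nat -> nat) : Prop := forall t, 0 < t -> 0 < g t.

Definition S_sub (A : nat -> Prop) (R : seq (seq nat)) (L : seq (nat -> nat))
  (a : nat) (H : seq nat) : Prop :=
  forall f g, List.In f R -> List.In g L ->
    A (a + peval f (\sum_(t <- H) g t)).

(* J_p-set. R, L: nonempty finite lists (sets) of elements of P and of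
   sequences in N; H: a nonempty finite subset of N, represented as a
   duplicate-free nonempty list of positive naturals. *)
Definition Jp_set (A : nat -> Prop) : Prop :=
  forall (R : seq (seq nat)) (L : seq (nat -> nat)),
    R <> nil -> (forall f, List.In f R -> inP f) ->
    L <> nil -> (forall g, List.In g L -> NSeq g) ->
    exists (a : nat) (H : seq nat),
      0 < a /\ H <> [::] /\ uniq H /\ (forall t, t \in H -> 0 < t) /\
      S_sub A R L a H.

From mathcomp Require Import all_boot.
From Stdlib Require List.

Set Implicit Arguments.
Unset Strict Implicit.
Unset Printing Implicit Defensive.

(* Removing a finite set B amounts to forcing every element of S_{R,L}(a,H)
   above max B.  Since f(x) >= x for f in P, it suffices that every sum
   over H is large.  With M = max B + 1, cut N into the blocks
   {tM, ..., tM + M - 1} and apply the J_p property of A to the block sums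
   g'(t) = g(tM) + ... + g(tM + M - 1): a sum of g' over H is a sum of g
   over the union of the blocks of H, which has at least M elements, each
   contributing at least 1. *)

Lemma leq_peval (c : seq nat) (x : nat) : inP c -> 0 < x -> x <= peval c x.
Proof.
move=> [c0 c_pos] x_gt0.
(* As c_0 = 0, every monomial c_i x^i is at least c_i x. *)
have : x * peval c 1 <= peval c x.
  rewrite /peval big_distrr /=; apply: leq_sum => -[[|i] lti] _ /=.
    by rewrite c0 !muln0.
  by rewrite exp1n muln1 mulnC leq_mul2l -{1}(expn1 x) leq_pexp2l ?orbT.
by apply: leq_trans; rewrite -{1}(muln1 x) leq_mul2l c_pos ?orbT.
Qed.

Lemma size_leq_sum_NSeq (g : nat -> nat) (s : seq nat) :
  NSeq g -> (forall t, t \in s -> 0 < t) -> size s <= \sum_(t <- s) g t.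
Proof.
move=> g_pos s_pos; rewrite -sum1_size big_seq [X in _ <= X]big_seq.
by apply: leq_sum => t /s_pos; apply: g_pos.
Qed.

Section Blocks.

Variable M : nat.

Definition block_sum (g : nat -> nat) (t : nat) : nat :=
  \sum_(j <- iota 0 M) g (t * M + j).

Definition blocks (H : seq nat) : seq nat :=
  [seq t * M + j | t <- H, j <- iota 0 M].

Lemma big_blocks (g : nat -> nat) (H : seq nat) :
  \sum_(t <- blocks H) g t = \sum_(t <- H) block_sum g t.
Proof. exact: big_allpairs_dep. Qed.

Lemma size_blocks (H : seq nat) : size (blocks H) = size H * M.
Proof. by rewrite size_allpairs size_iota. Qed.

Lemma blocks_uniq (H : seq nat) : uniq H -> uniq (blocks H).
Proof.
move=> H_uniq; apply: allpairs_uniq; rewrite ?iota_uniq //.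
move=> _ _ /allpairsP [[t j] [_ /= ltjM ->]] /allpairsP [[t' j'] [_ /= ltj'M ->]].
rewrite mem_iota leq0n add0n in ltjM; rewrite mem_iota leq0n add0n in ltj'M.
move=> /= eq_tj; have M_gt0 : 0 < M by apply: leq_ltn_trans ltjM.
have -> : t = t'.
  by move: (congr1 (divn^~ M) eq_tj); rewrite /= !divnMDl // !divn_small // !addn0.
by move: (congr1 (modn^~ M) eq_tj); rewrite /= !modnMDl !modn_small // => ->.
Qed.

Lemma blocks_pos (H : seq nat) :
  0 < M -> (forall t, t \in H -> 0 < t) -> forall t, t \in blocks H -> 0 < t.
Proof.
move=> M_gt0 H_pos _ /allpairsP [[t j] [/= /H_pos t_gt0 _ ->]].
by rewrite ltn_addr // muln_gt0 t_gt0.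
Qed.

Lemma NSeq_block_sum (g : nat -> nat) : 0 < M -> NSeq g -> NSeq (block_sum g).
Proof.
move=> M_gt0 g_pos t t_gt0; rewrite /block_sum; case: M M_gt0 => // M' _.
by rewrite big_cons ltn_addr // g_pos // addn0 muln_gt0 t_gt0.
Qed.

End Blocks.

Lemma Jp_set_sub (A A' : nat -> Prop) :
  (forall n, A n -> A' n) -> Jp_set A -> Jp_set A'.
Proof.
move=> subAA' JA R L R_nil R_P L_nil L_NSeq.
have [a [H [a_gt0 [H_nil [H_uniq [H_pos S_A]]]]]] := JA R L R_nil R_P L_nil L_NSeq.
by exists a, H; do 4!split=> //; move=> f g Rf Lg; apply/subAA'/S_A.
Qed.

Lemma Jp_set_gt (A : nat -> Prop) (m : nat) :
  Jp_set A -> Jp_set (fun n => A n /\ m < n).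
Proof.
move=> JA R L R_nil R_P L_nil L_NSeq; set M := m.+1.
have L'_nil : map (block_sum M) L <> nil by case: L L_nil {L_NSeq}.
have L'_NSeq g : List.In g (map (block_sum M) L) -> NSeq g.
  by move=> /List.in_map_iff [g' [<- /L_NSeq]]; apply: NSeq_block_sum.
have [a [H [a_gt0 [H_nil [H_uniq [H_pos S_A]]]]]] :=
  JA R _ R_nil R_P L'_nil L'_NSeq.
have size_H : 0 < size H by case: H H_nil {H_uniq H_pos S_A}.
exists a, (blocks M H); split=> //; split.
  by move/(congr1 size); rewrite size_blocks; case: (size H) size_H.
split; first exact: blocks_uniq.
split; first exact: blocks_pos.
move=> f g Rf Lg; split.
  by rewrite big_blocks; apply: S_A Rf _; apply: List.in_map.
have M_le : M <= \sum_(t <- blocks M H) g t.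
  apply: leq_trans _ (size_leq_sum_NSeq (L_NSeq g Lg) (blocks_pos (ltn0Sn m) H_pos)).
  by rewrite size_blocks leq_pmull.
have sum_gt0 := leq_trans (ltn0Sn m) M_le.
exact: leq_trans M_le (leq_trans (leq_peval (R_P f Rf) sum_gt0) (leq_addl _ _)).
Qed.

Theorem theorem5p3 (A B : nat -> Prop) (Bfin : seq nat) :
  (forall n, A n -> 0 < n) ->
  (forall n, B n <-> n \in Bfin) ->
  Jp_set A ->
  Jp_set (fun n => A n /\ ~ B n).
Proof.
move=> _ B_fin JA.
apply: (Jp_set_sub _ (Jp_set_gt (\max_(b <- Bfin) b) JA)) => n [An gt_n].
split=> // /B_fin inB.
by have := leq_bigmax_seq (F := id) n inB isT; rewrite leqNgt gt_n.
Qed.
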